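(* Let $\mathfrak G$ be a Grassmann semialgebra over a commutative semiring $\mathcal A$ and an $\mathcal A$-module $V$. Then for all $v_1,v_2\in V$, $$(v_1+v_2)^2\succeq_\circ v_1^2+v_2^2 .$$
   Context: A Grassmann (exterior) semialgebra over $\mathcal A$ and $V$ is an associative $\mathcal A$-semialgebra $\mathfrak G$ (product written $\wedge$, with $x^2=x\wedge x$) generated by $\mathcal A$ and $V$; $\mathfrak G_k$ is the submodule generated by products of $k$ elements of $V$ and $\mathfrak G_{\ge2}=\sum_{k\ge2}\mathfrak G_k$; it is equipped with a negation map $(-)$ on $\mathfrak G_{\ge2}$ (an additive bijection of order $\le2$ commuting with scalars) such that $v_1\wedge v_2=(-)(v_2\wedge v_1)$ for all $v_1,v_2\in V$. A quasi-zero is an element $a+((-)a)$; $\mathfrak G^\circ$ is the set of quasi-zeros. The relation $a_0\preceq_\circ a_1$ (also written $a_1\succeq_\circ a_0$) means $a_1=a_0+d$ for some $d\in\mathfrak G^\circ$. *)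

From mathcomp Require Import all_boot all_algebra.
Set Implicit Arguments. Unset Strict Implicit. Unset Printing Implicit Defensive.
Import GRing.Theory.
Local Open Scope ring_scope.

Section Grassmann.
Variables (A : comPzSemiRingType) (V : lSemiModType A) (G : semiAlgType A).

Inductive in_Gk (emb : V -> G) (k : nat) : G -> Prop :=
  | Gk_zero : in_Gk emb k 0
  | Gk_add (a : A) (vs : k.-tuple V) (x : G) :
      in_Gk emb k x -> in_Gk emb k (a *: \prod_(v <- vs) emb v + x).

Inductive in_Gge2 (emb : V -> G) : G -> Prop :=
  | Gge2_zero : in_Gge2 emb 0
  | Gge2_add (k : nat) (x y : G) :
      (2 <= k)%N -> in_Gk emb k x -> in_Gge2 emb y -> in_Gge2 emb (x + y).

Definition generated_by (emb : V -> G) : Prop :=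
  forall S : G -> Prop,
    S 1 -> (forall v, S (emb v)) ->
    (forall x y, S x -> S y -> S (x + y)) ->
    (forall x y, S x -> S y -> S (x * y)) ->
    (forall (a : A) x, S x -> S (a *: x)) ->
    forall x, S x.

Record grassmann_semialg := GrassmannSemialg {
  emb : V -> G;
  iota_add : forall u w, emb (u + w) = emb u + emb w;
  iota_scale : forall (a : A) u, emb (a *: u) = a *: emb u;
  iota_inj : injective emb;
  gen : generated_by emb;
  negm : G -> G;
  negm_stable : forall x, in_Gge2 emb x -> in_Gge2 emb (negm x);
  negm_add : forall x y, in_Gge2 emb x -> in_Gge2 emb y ->
                negm (x + y) = negm x + negm y;
  negm_invol : forall x, in_Gge2 emb x -> negm (negm x) = x;
  negm_scale : forall (a : A) x, in_Gge2 emb x -> negm (a *: x) = a *: negm x;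
  negm_anticomm : forall v1 v2 : V,
      emb v1 * emb v2 = negm (emb v2 * emb v1)
}.

Definition quasi_zero (GS : grassmann_semialg) (d : G) : Prop :=
  exists a, in_Gge2 (emb GS) a /\ d = a + negm GS a.

Definition preceq_circ (GS : grassmann_semialg) (a0 a1 : G) : Prop :=
  exists d, quasi_zero GS d /\ a1 = a0 + d.

End Grassmann.

From mathcomp Require Import all_boot all_algebra.
Import GRing.Theory.
Local Open Scope ring_scope.

(* The square of [v1 + v2] is [v1^2 + v2^2] plus the cross term [v1 v2 + v2 v1];
   by anticommutativity this cross term is [c + (-)c] with [c = v2 v1] in [G_2],
   i.e. a quasi-zero. *)

Lemma sqrD_cross (R : pzSemiRingType) (x y : R) :
  (x + y) * (x + y) = x * x + y * y + (x * y + y * x).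
Proof.
rewrite mulrDl !mulrDr -!addrA; congr (_ + _).
by rewrite addrA addrC.
Qed.

Section GrassmannQuasiZero.
Variables (A : comPzSemiRingType) (V : lSemiModType A) (G : semiAlgType A).
Variable GS : grassmann_semialg V G.

Lemma in_Gk_prod (k : nat) (vs : k.-tuple V) :
  in_Gk (emb GS) k (\prod_(v <- vs) emb GS v).
Proof.
by rewrite -[X in in_Gk _ _ X]addr0 -[X in X + _]scale1r; do 2!constructor.
Qed.

Lemma in_Gge2_Gk (k : nat) (x : G) :
  (2 <= k)%N -> in_Gk (emb GS) k x -> in_Gge2 (emb GS) x.
Proof.
by move=> k_ge2 Gk_x; rewrite -[x]addr0; apply: Gge2_add Gk_x (Gge2_zero _).
Qed.

Lemma in_Gge2_mul_emb (u w : V) : in_Gge2 (emb GS) (emb GS u * emb GS w).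
Proof.
apply: (@in_Gge2_Gk 2) => //.
by have := in_Gk_prod 2 [tuple u; w]; rewrite /= !big_cons big_nil mulr1.
Qed.

Lemma quasi_zero_addnegm (x : G) :
  in_Gge2 (emb GS) x -> quasi_zero GS (x + negm GS x).
Proof. by exists x. Qed.

Lemma quasi_zero_anticomm (u w : V) :
  quasi_zero GS (emb GS u * emb GS w + emb GS w * emb GS u).
Proof.
by rewrite negm_anticomm addrC; apply/quasi_zero_addnegm/in_Gge2_mul_emb.
Qed.

Lemma preceq_circ_addr (a d : G) : quasi_zero GS d -> preceq_circ GS a (a + d).
Proof. by exists d. Qed.

End GrassmannQuasiZero.

Theorem proposition2p23 (A : comPzSemiRingType) (V : lSemiModType A)
  (G : semiAlgType A) (GS : grassmann_semialg V G) (v1 v2 : V) :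
  preceq_circ GS
    (emb GS v1 * emb GS v1 + emb GS v2 * emb GS v2)
    (emb GS (v1 + v2) * emb GS (v1 + v2)).
Proof.
by rewrite iota_add sqrD_cross; apply/preceq_circ_addr/quasi_zero_anticomm.
Qed.
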